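(* Let $K$ be a finite field of characteristic $p$ and order $q$, and let $d$ be an integer coprime to $q-1$. Then $$V_{K,d}=\min_{\chi\in\widehat{K^\times},\ \chi\neq 1}\nu_p\big(G_K(\chi)\,G_K(\bar\chi^{\,d})\big).$$
   Context: $\psi_K(x)=\exp(2\pi i\,\mathrm{Tr}_{K/\mathbb{F}_p}(x)/p)$; $W_{K,d}(a)=\sum_{x\in K}\psi_K(x^d+ax)$. $\widehat{K^\times}$ is the group of multiplicative characters of $K$, and for $\chi\in\widehat{K^\times}$ the Gauss sum is $G_K(\chi)=\sum_{a\in K^\times}\chi(a)\psi_K(a)$. $\nu_p$ denotes the $p$-adic valuation, normalized by $\nu_p(p)=1$, extended to $\mathbb{Q}(\zeta_p,\zeta_{q-1})$ (so fractional values may occur), with $\nu_p(0)=\infty$. Define $V_{K,d}=\min_{a\in K^\times}\nu_p(W_{K,d}(a))$. *)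

From mathcomp Require Import all_boot all_order all_algebra all_field.
Set Implicit Arguments. Unset Strict Implicit. Unset Printing Implicit Defensive.
Import Order.TTheory GRing.Theory Num.Theory.
Local Open Scope ring_scope.

(* ---- extended valuation values: option rat, with None = +infinity ---- *)
Definition oadd (a b : option rat) : option rat :=
  match a, b with Some x, Some y => Some (x + y) | _, _ => None end.
Definition omin (a b : option rat) : option rat :=
  match a, b with
  | None, _ => b
  | _, None => a
  | Some x, Some y => Some (Num.min x y)
  end.
Definition ole (a b : option rat) : bool :=
  match a, b with
  | _, None => true
  | None, Some _ => false
  | Some x, Some y => x <= y
  end.

Definition is_omin (P : option rat -> Prop) (m : option rat) : Prop :=
  P m /\ forall x, P x -> ole m x.

(* v is a (rational-valued) valuation on algC extending nu_p, i.e. nu_p(p)=1,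
   nu_p(0) = infinity.  Every extension of nu_p to Q(zeta_p, zeta_{q-1})
   is the restriction of such a v. *)
Definition pval (p : nat) (v : algC -> option rat) : Prop :=
  [/\ forall x, v x = None <-> x = 0,
      forall x y, v (x * y) = oadd (v x) (v y),
      forall x y, ole (omin (v x) (v y)) (v (x + y))
    & v p%:R = Some 1].

Section FF.
Variables (K : finFieldType) (p : nat).

(* zeta_p = exp(2 pi i / p): p.-root (-1) is exp(i pi / p) (minimal argument) *)
Definition zeta_p : algC := (p.-root (-1)) ^+ 2.

Definition absTr (x : K) : K := \sum_(i < logn p #|K|) x ^+ (p ^ i).

Definition trnat (x : K) : nat :=
  odflt ord0 [pick k : 'I_p.+1 | (k < p)%N && ((k%:R : K) == absTr x)].

Definition psiK (x : K) : algC := zeta_p ^+ trnat x.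

Definition WKd (d : nat) (a : K) : algC := \sum_(x : K) psiK (x ^+ d + a * x).

(* multiplicative characters of K^x, represented as functions K -> algC
   (the value at 0 is irrelevant and never used) *)
Definition mchar (chi : K -> algC) : Prop :=
  chi 1 = 1 /\ forall x y : K, x != 0 -> y != 0 -> chi (x * y) = chi x * chi y.
Definition mchar_nontriv (chi : K -> algC) : Prop :=
  exists2 a : K, a != 0 & chi a != 1.

Definition gaussK (chi : K -> algC) : algC :=
  \sum_(a : K | a != 0) chi a * psiK a.

Definition VKd (v : algC -> option rat) (d : nat) : option rat :=
  \big[omin/None]_(a : K | a != 0) v (WKd d a).

End FF.

From mathcomp Require Import all_boot all_order all_algebra all_field.
From mathcomp Require Import cyclic ring lra.
Import Order.TTheory GRing.Theory Num.Theory.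
Set Implicit Arguments. Unset Strict Implicit. Unset Printing Implicit Defensive.
Local Open Scope ring_scope.

(* Write xi = conj(chi)^d.  Substituting a -> a/x in G(xi) and using that x |-> x^d
   permutes K^* (as d is coprime to q - 1) gives G(chi) G(xi) = sum_{a <> 0} W(a) xi(a);
   the xi(a) are roots of unity, so every nu_p(G(chi) G(xi)) is at least V.
   Conversely, orthogonality of the characters chi_j of K^* inverts this identity:
   (q - 1)(W(a) - 1) = sum_j G(chi_j) G(xi_j) chi_j(a)^d, where the trivial character
   contributes 1.  Hence (q - 1) W(a) = q + (the sum over nontrivial j), and as
   nu_p(q - 1) = 0, nu_p(W(a)) >= min(n, M) with q = p^n and M the minimum over the
   nontrivial chi_j.  Finally G(chi) G(conj chi) = chi(-1) q shows that the values for
   chi_1 and its conjugate add up to 2n, so M <= n and V = M. *)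

Lemma ole_refl a : ole a a.
Proof. by case: a => //= x; rewrite lexx. Qed.

Lemma ole_trans a b c : ole a b -> ole b c -> ole a c.
Proof. by move: a b c => [x|] [y|] [z|] //=; apply: le_trans. Qed.

Lemma ole_total a b : ole a b || ole b a.
Proof. by move: a b => [x|] [y|] //=; apply: le_total. Qed.

Lemma ole_anti a b : ole a b -> ole b a -> a = b.
Proof.
by move: a b => [x|] [y|] //= h1 h2; congr Some; apply/eqP; rewrite eq_le h1 h2.
Qed.

Lemma ole_omin x a b : ole x (omin a b) = ole x a && ole x b.
Proof. by move: x a b => [x|] [y|] [z|] //=; rewrite ?andbT // le_min. Qed.

Lemma omin_l a b : ole a b -> omin a b = a.
Proof. by move: a b => [x|] [y|] //= h; congr Some; apply/min_idPl. Qed.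

Lemma omin_r a b : ole b a -> omin a b = b.
Proof. by move: a b => [x|] [y|] //= h; congr Some; apply/min_idPr. Qed.

Lemma omin_cases a b : omin a b = a \/ omin a b = b.
Proof. by case/orP: (ole_total a b) => [/omin_l|/omin_r] ->; [left|right]. Qed.

Lemma ole_ominl a b : ole (omin a b) a.
Proof. by have := ole_refl (omin a b); rewrite ole_omin => /andP[]. Qed.

Lemma ole_ominr a b : ole (omin a b) b.
Proof. by have := ole_refl (omin a b); rewrite ole_omin => /andP[]. Qed.

Lemma omin_mono a b c d : ole a b -> ole c d -> ole (omin a c) (omin b d).
Proof.
move=> ab cd; rewrite ole_omin.
by rewrite (ole_trans (ole_ominl _ _) ab) (ole_trans (ole_ominr _ _) cd).
Qed.

Lemma ole_half a b m r : oadd a b = Some (r *+ 2) -> ole m a -> ole m b ->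
  ole m (Some r).
Proof. by case: a b m => [x|] [y|] [z|] //= [xy] zx zy; lra. Qed.

Lemma big_omin_glb (I : Type) (r : seq I) (P : pred I) (F : I -> option rat) x :
  (forall i, P i -> ole x (F i)) -> ole x (\big[omin/None]_(i <- r | P i) F i).
Proof.
move=> h; elim/big_ind: _ => //; first by case: x {h}.
by move=> a b ha hb; rewrite ole_omin ha hb.
Qed.

Lemma big_omin_lb (I : eqType) (r : seq I) (F : I -> option rat) i :
  i \in r -> ole (\big[omin/None]_(j <- r) F j) (F i).
Proof.
elim: r => // a r IH; rewrite in_cons big_cons => /predU1P[<-|/IH]; first exact: ole_ominl.
exact: ole_trans (ole_ominr _ _).
Qed.

Lemma big_omin_attained (I : eqType) (r : seq I) (F : I -> option rat) :
  r != [::] -> exists2 i, i \in r & \big[omin/None]_(i <- r) F i = F i.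
Proof.
elim: r => // a r IH _; rewrite big_cons.
have [->|[i ir ->]] : r = [::] \/ exists2 i, i \in r & \big[omin/None]_(i <- r) F i = F i.
- by case: r IH => [|b r] IH; [left | right; apply: IH].
- by exists a; rewrite ?mem_head // big_nil; case: (F a).
have [->|->] := omin_cases (F a) (F i); first by exists a; rewrite ?mem_head.
by exists i; rewrite // in_cons ir orbT.
Qed.

Section Valuation.
Variables (p : nat) (v : algC -> option rat).
Hypothesis hv : pval p v.

Lemma v_eqNone x : (v x = None) <-> x = 0.
Proof. by case: hv. Qed.

Lemma vM x y : v (x * y) = oadd (v x) (v y).
Proof. by case: hv. Qed.

Lemma vD x y : ole (omin (v x) (v y)) (v (x + y)).
Proof. by case: hv. Qed.

Lemma v0 : v 0 = None.
Proof. exact/v_eqNone. Qed.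

Lemma v1 : v 1 = Some 0.
Proof.
case E: (v 1) => [r|]; last by move/v_eqNone: E => /eqP; rewrite oner_eq0.
have := vM 1 1; rewrite mulr1 E => -[rr]; congr Some; lra.
Qed.

Lemma vX x r k : v x = Some r -> v (x ^+ k) = Some (r *+ k).
Proof.
move=> vx; elim: k => [|k IH]; first by rewrite expr0 v1.
by rewrite exprSr vM IH vx /= mulrSr.
Qed.

Lemma v_charX n : v (p ^ n)%:R = Some n%:R.
Proof. by rewrite natrX (@vX _ 1) ?mulr1n //; case: hv. Qed.

Lemma v_unity_root z m : (0 < m)%N -> z ^+ m = 1 -> v z = Some 0.
Proof.
move=> m_gt0 zm; case E: (v z) => [r|]; last first.
  by move/v_eqNone: E zm => ->; rewrite expr0n gtn_eqF // => /eqP; rewrite eq_sym oner_eq0.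
by have := vX m E; rewrite zm v1 => -[/esym/eqP]; rewrite mulrn_eq0 gtn_eqF //= => /eqP->.
Qed.

Lemma vMunitr x z : v z = Some 0 -> v (x * z) = v x.
Proof. by move=> vz; rewrite vM vz; case: (v x) => //= r; rewrite addr0. Qed.

Lemma vN x : v (- x) = v x.
Proof. by rewrite -mulrN1 vMunitr // (@v_unity_root _ 2) // sqrrN expr1n. Qed.

Lemma v_sum (I : Type) (r : seq I) (P : pred I) (F : I -> algC) :
  ole (\big[omin/None]_(i <- r | P i) v (F i)) (v (\sum_(i <- r | P i) F i)).
Proof.
elim/big_ind2: _ => [|x1 x2 y1 y2 h1 h2|i _]; last exact: ole_refl.
  by rewrite v0.
exact: ole_trans (omin_mono h1 h2) (vD _ _).
Qed.

Lemma vD_strict x y : ~~ ole (v y) (v x) -> v (x + y) = v x.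
Proof.
move=> yx; have xy : ole (v x) (v y) by case/orP: (ole_total (v x) (v y)) yx => ->.
apply: ole_anti; last by rewrite -(omin_l xy) vD.
have := vD (x + y) (- y); rewrite addrK vN.
by have [->|-> yxy] := omin_cases (v (x + y)) (v y); last rewrite yxy in yx.
Qed.
End Valuation.

Lemma unity_root_coprime (R : pzRingType) (z : R) m n :
  (0 < m)%N -> coprime m n -> z ^+ m = 1 -> z ^+ n = 1 -> z = 1.
Proof.
move=> m_gt0 /eqP cmn zm zn; have [a _ /dvdnP[c]] := Bezoutl n m_gt0.
rewrite cmn => hc; have : z ^+ (1 + a * n) = 1 by rewrite hc mulnC exprM zm expr1n.
by rewrite exprD expr1 mulnC exprM zn expr1n mulr1.
Qed.

Lemma conj_unity_root (z : algC) m : (0 < m)%N -> z ^+ m = 1 -> z^* = z^-1.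
Proof.
move=> m_gt0 zm; have z_neq0 : z != 0.
  by apply: contra_eq_neq zm => ->; rewrite expr0n gtn_eqF // eq_sym oner_eq0.
have nz : `|z| = 1.
  by apply/eqP; rewrite -(pexpr_eq1 m_gt0) // -normrX zm normr1.
by apply: (mulfI z_neq0); rewrite divff // -normCK nz expr1n.
Qed.

Section ZetaP.
Variables (p : nat) (pp : prime p).

Lemma zeta_pE : zeta_p p ^+ p = 1.
Proof.
by rewrite /zeta_p -exprM mulnC exprM rootCK ?prime_gt0 // sqrrN expr1n.
Qed.

Lemma zeta_p_neq1 : zeta_p p != 1.
Proof.
set r := p.-root (-1 : algC); have rp : r ^+ p = -1 by rewrite rootCK ?prime_gt0.
rewrite /zeta_p -/r -subr_eq0 subr_sqr_1 mulf_eq0 subr_eq0 addr_eq0.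
apply/norP; split; apply/eqP => hr.
  by move: rp; rewrite hr expr1n => /eqP; rewrite -subr_eq0 opprK -(natrD _ 1 1) pnatr_eq0.
by have := @rootC_lt0 algC p (-1) (prime_gt1 pp); rewrite -/r hr ltrN10.
Qed.

Lemma zeta_pX_neq1 k : (0 < k < p)%N -> zeta_p p ^+ k != 1.
Proof.
case/andP=> k_gt0 kp; apply: contra zeta_p_neq1 => /eqP zk.
apply/eqP/(unity_root_coprime (prime_gt0 pp) _ zeta_pE zk).
by rewrite prime_coprime // gtnNdvd.
Qed.
End ZetaP.

Section AdditiveCharacter.
Variables (K : finFieldType) (p : nat) (hp : p \in [pchar K]).
Let pp : prime p := pcharf_prime hp.
Local Notation n := (logn p #|K|).
Local Notation psi := (psiK p).

Lemma logn_card_gt0 : (0 < n)%N.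
Proof.
by rewrite lt0n; apply: contraTneq (finNzRing_gt1 K) => n0; rewrite (card_pprimeChar hp) n0.
Qed.

Lemma absTrD (x y : K) : absTr p (x + y) = absTr p x + absTr p y.
Proof.
rewrite /absTr -big_split; apply: eq_bigr => i _.
by apply: exprDn_pchar; rewrite pnatX pnatE // hp.
Qed.

Lemma absTr0 : absTr p (0 : K) = 0.
Proof. by rewrite /absTr big1 // => i _; rewrite expr0n expn_eq0 eqn0Ngt prime_gt0. Qed.

Lemma absTr_frobenius (x : K) : absTr p x ^+ p = absTr p x.
Proof.
rewrite /absTr -(pFrobenius_autE hp) rmorph_sum /=.
under eq_bigr => i _ do rewrite pFrobenius_autE -exprM -expnSr.
have := big_ord_recl n (fun i : 'I_n.+1 => x ^+ (p ^ i)) (op := +%R) (idx := 0).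
rewrite big_ord_recr /= -(card_pprimeChar hp) expf_card expn0 expr1 => h.
by apply: (addIr x); rewrite h addrC.
Qed.

Lemma natr_inj_pchar a b : (a < p)%N -> (b < p)%N -> a%:R = b%:R :> K -> a = b.
Proof.
wlog ab : a b / (a <= b)%N => [wlog_ab ap bp e|ap bp e].
  by case: (leqP a b) => [|/ltnW] ?; [|apply/esym]; apply: wlog_ab.
have : (p %| b - a)%N by rewrite (dvdn_pcharf hp) natrB // e subrr.
have [/eqP|ba_gt0] := posnP (b - a).
  by rewrite subn_eq0 => ba _; apply/eqP; rewrite eqn_leq ab.
by move/(dvdn_leq ba_gt0); rewrite leqNgt (leq_ltn_trans (leq_subr _ _) bp).
Qed.

Lemma frobenius_fixed_natr (y : K) : y ^+ p = y -> exists2 k, (k < p)%N & k%:R = y.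
Proof.
move=> yp; have [/existsP[k /eqP <-]|no_k] := boolP [exists k : 'I_p, k%:R == y].
  by exists k.
have frob_natr k : (k%:R : K) ^+ p = k%:R by rewrite -(pFrobenius_autE hp) rmorph_nat.
pose P : {poly K} := 'X^p - 'X; pose s := y :: [seq k%:R | k <- iota 0 p].
have sizeP : size P = p.+1.
  by rewrite size_polyDl size_polyXn // size_polyN size_polyX ltnS prime_gt1.
have P_neq0 : P != 0 by rewrite -size_poly_eq0 sizeP.
have rootsP : all (root P) s.
  by apply/allP => z /predU1P[->|/mapP[k _ ->]]; rewrite /root !hornerE ?frob_natr ?yp subrr.
have uniq_s : uniq s.
  rewrite /= map_inj_in_uniq ?iota_uniq ?andbT.
    apply/mapP => -[k]; rewrite mem_iota add0n => /andP[_ kp] ek.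
    by move/existsP: no_k; apply; exists (Ordinal kp); rewrite ek.
  by move=> a b; rewrite !mem_iota !add0n => /andP[_ ap] /andP[_ bp]; apply: natr_inj_pchar.
have := max_poly_roots P_neq0 rootsP uniq_s.
by rewrite /= size_map size_iota sizeP ltnn.
Qed.

Lemma trnatE (x : K) : (trnat p x < p)%N /\ (trnat p x)%:R = absTr p x.
Proof.
have [k kp kE] := frobenius_fixed_natr (absTr_frobenius x).
rewrite /trnat; case: pickP => [j /andP[jp /eqP] //|no_k].
by have := no_k (Ordinal (ltnW kp : (k < p.+1)%N)); rewrite /= kp kE eqxx.
Qed.

Lemma trnatD (x y : K) : trnat p (x + y) = ((trnat p x + trnat p y) %% p)%N.
Proof.
have [xyp xyE] := trnatE (x + y); have [_ xE] := trnatE x; have [_ yE] := trnatE y.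
apply: natr_inj_pchar; rewrite ?ltn_mod ?prime_gt0 //.
by rewrite GRing.natr_mod_pchar // natrD xyE xE yE absTrD.
Qed.

Lemma psiD (x y : K) : psi (x + y) = psi x * psi y.
Proof. by rewrite /psiK trnatD expr_mod ?exprD // zeta_pE. Qed.

Lemma psi0 : psi (0 : K) = 1.
Proof.
have [t0p t0E] := trnatE 0.
by rewrite /psiK (@natr_inj_pchar _ 0 t0p) ?prime_gt0 // t0E absTr0.
Qed.

Lemma absTr_neq0 : exists x : K, absTr p x != 0.
Proof.
apply/existsP; apply: contraT => /existsPn absTr_eq0; move: logn_card_gt0.
case E: n => [//|m] _; pose Q : {poly K} := \sum_(i < n) 'X^(p ^ i).
have Q_neq0 : Q != 0.
  apply/eqP => /(congr1 (fun q : {poly K} => q`_(p ^ m))).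
  rewrite coef0 coef_sum /Q E big_ord_recr /= coefXn eqxx big1 ?add0r.
    by move/eqP; rewrite oner_eq0.
  by move=> i _; rewrite coefXn eqn_exp2l ?prime_gt1 // gtn_eqF.
have sizeQ : (size Q <= (p ^ m).+1)%N.
  apply: leq_trans (size_sum _ _ _) _; apply/bigmax_leqP => i _.
  by rewrite size_polyXn ltnS leq_pexp2l ?prime_gt0 // -ltnS -E.
have rootsQ : all (root Q) (enum K).
  apply/allP => x _; rewrite /root horner_sum.
  by under eq_bigr do rewrite hornerXn; rewrite -/(absTr p x) (negPn (absTr_eq0 x)).
have := max_poly_roots Q_neq0 rootsQ (enum_uniq _).
rewrite -cardE (card_pprimeChar hp) E expnS => /leq_trans/(_ sizeQ).
by rewrite ltnS leqNgt ltn_Pmull ?prime_gt1 ?expn_gt0 ?prime_gt0.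
Qed.

Lemma psi_nontriv : exists x : K, psi x != 1.
Proof.
have [x trx] := absTr_neq0; have [trxp trxE] := trnatE x; exists x.
apply: zeta_pX_neq1 => //; rewrite trxp andbT lt0n.
by apply: contra_neq trx => tr0; rewrite -trxE tr0.
Qed.

Lemma sum_psi (a : K) : a != 0 -> \sum_x psi (a * x) = 0.
Proof.
move=> a_neq0; set S := \sum_(x : K) psi x.
have -> : \sum_x psi (a * x) = S by rewrite [RHS](reindex_inj (mulfI a_neq0)).
have [y psiy] := psi_nontriv; have : psi y * S = S.
  by rewrite mulr_sumr /S [RHS](reindex_inj (addrI y)); apply: eq_bigr => x _; rewrite psiD.
by move/eqP; rewrite -subr_eq0 -{2}[S]mul1r -mulrBl mulf_eq0 subr_eq0 (negbTE psiy) => /eqP.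
Qed.
End AdditiveCharacter.

Section GaussSums.
Variables (K : finFieldType) (p : nat) (hp : p \in [pchar K]).
Local Notation N := (#|K|.-1).
Local Notation psi := (psiK p).

Lemma predcard_gt0 : (0 < N)%N.
Proof. by rewrite -ltnS prednK ?finNzRing_gt1 // ltnW ?finNzRing_gt1. Qed.

Lemma expf_predcard (x : K) : x != 0 -> x ^+ N = 1.
Proof.
move=> x_neq0; apply: (mulfI x_neq0).
by rewrite mulr1 -exprS prednK ?expf_card // ltnW ?finNzRing_gt1.
Qed.

Lemma natr_card : #|K|%:R = N%:R + 1 :> algC.
Proof. by rewrite natr1 prednK // ltnW ?finNzRing_gt1. Qed.

Lemma finField_prim_root : exists g : K, N.-primitive_root g.
Proof.
have /hasP[g _ pg] : has N.-primitive_root [seq x <- enum K | x != 0].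
  apply: has_prim_root predcard_gt0 _ _ _.
  - by apply/allP => x; rewrite mem_filter unity_rootE => /andP[/expf_predcard-> _].
  - by rewrite filter_uniq ?enum_uniq.
  - rewrite -(cardC1 (0 : K)) cardE /enum_mem !size_filter count_filter.
    by apply: eq_leq; apply: eq_count => x /=; rewrite !inE andbT.
by exists g.
Qed.

Lemma sum_nz_mull (R : nmodType) (b : K) (F : K -> R) : b != 0 ->
  \sum_(x | x != 0) F x = \sum_(x | x != 0) F (b * x).
Proof.
move=> b_neq0; rewrite (reindex_inj (mulfI b_neq0)) /=.
by apply: eq_bigl => x; rewrite mulf_eq0 (negbTE b_neq0).
Qed.

Lemma sum_nz_const (c : algC) : \sum_(x : K | x != 0) c = c *+ N.
Proof. by rewrite sumr_const -(cardC1 (0 : K)); congr (_ *+ _); apply: eq_card => x. Qed.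

Lemma sum_nz_delta (F : K -> algC) (c : K) : c != 0 ->
  \sum_(x | x != 0) (if x == c then F x else 0) = F c.
Proof.
move=> c_neq0; rewrite (bigD1 c) //= eqxx big1 ?addr0 // => x /andP[_].
by move/negbTE->.
Qed.

Lemma sum_nz_psi (a : K) : a != 0 -> \sum_(x | x != 0) psi (a * x) = -1.
Proof.
move=> a_neq0; have := sum_psi hp a_neq0.
by rewrite (bigD1 0) //= mulr0 (psi0 hp) addrC => /eqP; rewrite addr_eq0 => /eqP.
Qed.

Lemma eq_gaussK (f h : K -> algC) : f =1 h -> gaussK p f = gaussK p h.
Proof. by move=> fh; apply: eq_bigr => x _; rewrite fh. Qed.

Section Character.
Variable chi : K -> algC.
Hypothesis hchi : mchar chi.

Lemma mcharX (x : K) k : x != 0 -> chi (x ^+ k) = chi x ^+ k.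
Proof.
case: hchi => chi1 chiM x_neq0; elim: k => [|k IH]; first by rewrite !expr0.
by rewrite !exprS chiM ?expf_neq0 // IH.
Qed.

Lemma mchar_unity (x : K) : x != 0 -> chi x ^+ N = 1.
Proof. by move=> x_neq0; rewrite -mcharX // expf_predcard //; case: hchi. Qed.

Lemma mchar_neq0 (x : K) : x != 0 -> chi x != 0.
Proof.
move=> x_neq0; apply: contra_eq_neq (mchar_unity x_neq0) => ->.
by rewrite expr0n gtn_eqF ?predcard_gt0 // eq_sym oner_eq0.
Qed.

Lemma mchar_conj (x : K) : x != 0 -> (chi x)^* = (chi x)^-1.
Proof. by move=> x_neq0; apply: (conj_unity_root predcard_gt0); apply: mchar_unity. Qed.

Lemma mcharV (x : K) : x != 0 -> chi x^-1 = (chi x)^-1.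
Proof.
case: hchi => chi1 chiM x_neq0; apply: (mulfI (mchar_neq0 x_neq0)).
by rewrite -chiM ?invr_eq0 // mulfV // chi1 divff ?mchar_neq0.
Qed.

Lemma mchar_twistE d (x y a : K) : x != 0 -> y != 0 -> a != 0 ->
  chi x * (chi y)^* ^+ d * chi a ^+ d = chi (x * (a / y) ^+ d).
Proof.
case: hchi => _ chiM x_neq0 y_neq0 a_neq0.
have ay_neq0 : a / y != 0 by rewrite mulf_neq0 ?invr_neq0.
rewrite chiM ?expf_neq0 // mcharX // chiM ?invr_neq0 // mcharV // mchar_conj //.
by rewrite exprMn mulrAC mulrA.
Qed.

Lemma sum_mchar : mchar_nontriv chi -> \sum_(x | x != 0) chi x = 0.
Proof.
case: hchi => _ chiM [b b_neq0 chib]; set S := \sum_(x | x != 0) chi x.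
have : chi b * S = S.
  by rewrite mulr_sumr [RHS](sum_nz_mull _ b_neq0); apply: eq_bigr => x x_neq0; rewrite chiM.
by move/eqP; rewrite -subr_eq0 -{2}[S]mul1r -mulrBl mulf_eq0 subr_eq0 (negbTE chib) => /eqP.
Qed.

Lemma conj_mchar : mchar (fun x => (chi x)^*).
Proof.
case: hchi => chi1 chiM; split => [|x y x_neq0 y_neq0]; first by rewrite chi1 conjC1.
by rewrite chiM // rmorphM.
Qed.

Lemma exp_mchar d : mchar (fun x => chi x ^+ d).
Proof.
case: hchi => chi1 chiM; split => [|x y x_neq0 y_neq0]; first by rewrite chi1 expr1n.
by rewrite chiM // exprMn.
Qed.

Hypothesis chi_nontriv : mchar_nontriv chi.

Lemma conj_mchar_nontriv : mchar_nontriv (fun x => (chi x)^*).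
Proof. by case: chi_nontriv => b b_neq0 chib; exists b; rewrite // fmorph_eq1. Qed.

Lemma exp_mchar_nontriv d : coprime d N -> mchar_nontriv (fun x => chi x ^+ d).
Proof.
case: chi_nontriv => b b_neq0 chib cdN; exists b => //; apply: contra chib => /eqP chibd.
apply/eqP; apply: (unity_root_coprime predcard_gt0 _ (mchar_unity b_neq0) chibd).
by rewrite coprime_sym.
Qed.

Lemma gauss_conj :
  gaussK p chi * gaussK p (fun x => (chi x)^*) = chi (-1) * #|K|%:R.
Proof.
case: hchi => _ chiM; rewrite /gaussK big_distrr /=.
have shift x : x != 0 -> gaussK p chi * ((chi x)^* * psi x)
    = \sum_(t | t != 0) chi t * psi (x * (t + 1)).
  move=> x_neq0; rewrite mulr_suml (sum_nz_mull _ x_neq0); apply: eq_bigr => t t_neq0.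
  rewrite mchar_conj // chiM // mulrDr mulr1 (psiD hp).
  by move: (mchar_neq0 x_neq0) => chix_neq0; field.
rewrite (eq_bigr _ shift) exchange_big /=.
have sum_shift t : \sum_(x | x != 0) chi t * psi (x * (t + 1))
    = (if t == -1 then chi t * #|K|%:R else 0) - chi t.
  rewrite -mulr_sumr; have [->|t_neqN1] := eqVneq t (-1).
    under eq_bigr do rewrite addNr mulr0 (psi0 hp).
    by rewrite sum_nz_const natr_card; ring.
  under eq_bigr do rewrite mulrC; rewrite sum_nz_psi ?sub0r ?mulrN1 //.
  by rewrite addr_eq0.
rewrite (eq_bigr _ (fun t _ => sum_shift t)) sumrB sum_mchar // subr0.
rewrite -big_mkcondr /= (big_pred1 (-1)) // => t.
by rewrite andb_idl // => /eqP->; rewrite oppr_eq0 oner_eq0.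
Qed.
End Character.
End GaussSums.

Definition gauss_pair (K : finFieldType) (p d : nat) (chi : K -> algC) : algC :=
  gaussK p chi * gaussK p (fun x => (chi x)^* ^+ d).

Lemma eq_gauss_pair (K : finFieldType) (p d : nat) (f h : K -> algC) :
  f =1 h -> gauss_pair p d f = gauss_pair p d h.
Proof. by move=> fh; congr (_ * _); apply: eq_gaussK => x; rewrite fh. Qed.

Section GaussPair.
Variables (K : finFieldType) (p d : nat) (hp : p \in [pchar K]).
Local Notation N := (#|K|.-1).
Local Notation psi := (psiK p).
Hypotheses (d_gt0 : (0 < d)%N) (cdN : coprime d N).

Lemma expf_coprime_inj : injective (fun x : K => x ^+ d).
Proof.
move=> x y /= xy; have [x0|x_neq0] := eqVneq x 0.
  by move: xy; rewrite x0 expr0n gtn_eqF // => /esym/eqP; rewrite expf_eq0 d_gt0 => /eqP.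
have y_neq0 : y != 0 by apply: contra_eq_neq xy => ->; rewrite expr0n gtn_eqF ?expf_neq0.
apply/divr1_eq/(unity_root_coprime (predcard_gt0 K) (n := d)).
- by rewrite coprime_sym.
- by rewrite expf_predcard // mulf_neq0 ?invr_neq0.
- by rewrite exprMn exprVn xy divff // expf_neq0.
Qed.

Lemma sum_nz_expf (F : K -> algC) :
  \sum_(x | x != 0) F (x ^+ d) = \sum_(y | y != 0) F y.
Proof.
rewrite [RHS](reindex_inj expf_coprime_inj) /=.
by apply: eq_bigl => x; rewrite expf_eq0 d_gt0.
Qed.

Lemma gauss_pairE (chi : K -> algC) : mchar chi -> mchar_nontriv chi ->
  gauss_pair p d chi = \sum_(a | a != 0) WKd p d a * (chi a)^* ^+ d.
Proof.
move=> hchi chi_nontriv; set xi := fun a => (chi a)^* ^+ d.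
have hxi : mchar xi := exp_mchar (conj_mchar hchi) d.
have xi_nontriv : mchar_nontriv xi.
  exact: (exp_mchar_nontriv (conj_mchar hchi) (conj_mchar_nontriv chi_nontriv) cdN).
rewrite /WKd; under eq_bigr do rewrite mulr_suml.
rewrite exchange_big /= (bigD1 0) //=.
under eq_bigr do rewrite mulr0 expr0n gtn_eqF // addr0 (psi0 hp) mul1r.
rewrite sum_mchar // add0r.
have inner x : x != 0 -> \sum_(a | a != 0) psi (x ^+ d + a * x) * xi a
    = chi (x ^+ d) * psi (x ^+ d) * gaussK p xi.
  move=> x_neq0; case: hxi => _ xiM.
  rewrite (sum_nz_mull _ (invr_neq0 x_neq0)) /gaussK mulr_sumr.
  apply: eq_bigr => b b_neq0; rewrite xiM ?invr_eq0 // mulrAC mulVf // mul1r (psiD hp).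
  have -> : xi x^-1 = chi (x ^+ d).
    by rewrite /xi mchar_conj ?invr_eq0 // mcharV // invrK mcharX.
  ring.
by rewrite (eq_bigr _ inner) -mulr_suml (sum_nz_expf (fun y => chi y * psi y)).
Qed.
End GaussPair.

Section CharacterBasis.
Variables (K : finFieldType) (p d : nat) (hp : p \in [pchar K]).
Local Notation N := (#|K|.-1).
Local Notation psi := (psiK p).
Variables (g : K) (w : algC).
Hypotheses (pg : N.-primitive_root g) (pw : N.-primitive_root w).

Definition dlog (x : K) : nat := odflt 0%N (omap val [pick i : 'I_N | g ^+ i == x]).

Lemma dlogK (x : K) : x != 0 -> g ^+ dlog x = x.
Proof.
move=> x_neq0; have [i ->] := prim_rootP pg (expf_predcard x_neq0).
by rewrite /dlog; case: pickP => [j /eqP //|/(_ i)]; rewrite eqxx.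
Qed.

Lemma prim_root_neq0 : g != 0.
Proof. by rewrite (prim_root_eq0 pg) -lt0n predcard_gt0. Qed.

(* As j ranges over 'I_N, chj j runs through all the characters of K^*. *)
Definition chj (j : nat) (x : K) : algC := w ^+ (j * dlog x).

Lemma chjE j k (x : K) : x != 0 -> g ^+ k = x -> chj j x = w ^+ (j * k).
Proof.
move=> x_neq0 gk; have /eqP dlogE : dlog x == k %[mod N].
  by rewrite -(eq_prim_root_expr pg) gk dlogK.
by rewrite /chj -(prim_expr_mod pw) -modnMmr dlogE modnMmr prim_expr_mod.
Qed.

Lemma chj_mchar j : mchar (chj j).
Proof.
split=> [|x y x_neq0 y_neq0]; first by rewrite (@chjE _ 0) ?oner_eq0 ?muln0.
by rewrite (@chjE _ (dlog x + dlog y)) ?mulf_neq0 ?exprD ?dlogK // mulnDr exprD.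
Qed.

Lemma chj_nontriv j : (0 < j < N)%N -> mchar_nontriv (chj j).
Proof.
case/andP=> j_gt0 jN; exists g; first exact: prim_root_neq0.
rewrite (@chjE _ 1) ?prim_root_neq0 // muln1 -(prim_order_dvd pw).
by rewrite gtnNdvd.
Qed.

Lemma conj_chj j (x : K) : (chj j x)^* = chj (N.-1 * j) x.
Proof.
have w_neq0 : w != 0 by rewrite (prim_root_eq0 pw) -lt0n predcard_gt0.
have w_conj : w^* = w ^+ N.-1.
  rewrite (conj_unity_root (predcard_gt0 K) (prim_expr_order pw)).
  by apply: (mulfI w_neq0); rewrite mulfV // -exprS prednK ?predcard_gt0 ?prim_expr_order.
by rewrite /chj rmorphXn /= w_conj -exprM mulnA.
Qed.

Lemma sum_chj (x : K) : x != 0 -> \sum_(j < N) chj j x = if x == 1 then N%:R else 0.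
Proof.
move=> x_neq0; under eq_bigr do rewrite /chj mulnC exprM.
have -> : (x == 1) = (w ^+ dlog x == 1).
  by rewrite -(prim_order_dvd pw) (prim_order_dvd pg) dlogK.
have [->|wx_neq1] := eqVneq (w ^+ dlog x) 1.
  by under eq_bigr do rewrite expr1n; rewrite sumr_const card_ord.
apply/eqP; have := subrX1 (w ^+ dlog x) N.
rewrite [_ ^+ N]exprAC (prim_expr_order pw) expr1n subrr => /esym/eqP.
by rewrite mulf_eq0 subr_eq0 (negbTE wx_neq1).
Qed.

Lemma gauss_pair_chj0 : gauss_pair p d (chj 0) = 1.
Proof.
have sum_psi1 : gaussK p (fun _ : K => 1) = -1.
  by rewrite /gaussK -(sum_nz_psi hp (oner_neq0 K)); apply: eq_bigr => x _; rewrite !mul1r.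
have chj0 x : chj 0 x = 1 by rewrite /chj mul0n expr0.
rewrite /gauss_pair !(@eq_gaussK _ p _ (fun=> 1)) => [|x|x]; rewrite ?chj0 ?conjC1 ?expr1n //.
by rewrite sum_psi1 mulrNN mulr1.
Qed.

Hypothesis d_gt0 : (0 < d)%N.

Lemma WKd_sub1 (a : K) : WKd p d a - 1 = \sum_(x | x != 0) psi (x ^+ d + a * x).
Proof.
by rewrite /WKd (bigD1 0) //= expr0n gtn_eqF // mulr0 addr0 (psi0 hp) [1 + _]addrC addrK.
Qed.

Lemma sum_gauss_pair_chj (a : K) : a != 0 ->
  \sum_(j < N) gauss_pair p d (chj j) * chj j a ^+ d = N%:R * (WKd p d a - 1).
Proof.
move=> a_neq0; have twist_neq0 x y : x != 0 -> y != 0 -> x * (a / y) ^+ d != 0.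
  by move=> x_neq0 y_neq0; rewrite mulf_neq0 ?expf_neq0 ?mulf_neq0 ?invr_neq0.
have expand j : gauss_pair p d (chj j) * chj j a ^+ d
    = \sum_(x | x != 0) \sum_(y | y != 0) psi x * psi y * chj j (x * (a / y) ^+ d).
  rewrite /gauss_pair /gaussK !big_distrl /=; apply: eq_bigr => x x_neq0.
  rewrite big_distrr !big_distrl /=; apply: eq_bigr => y y_neq0.
  by rewrite -(mchar_twistE (chj_mchar j)) //; ring.
under eq_bigr do rewrite expand.
rewrite exchange_big /=; under eq_bigr do rewrite exchange_big /=.
have orthogonality x y : x != 0 -> y != 0 ->
    \sum_(j < N) psi x * psi y * chj j (x * (a / y) ^+ d)
    = if x == (y / a) ^+ d then psi x * psi y * N%:R else 0.
  move=> x_neq0 y_neq0; rewrite -mulr_sumr sum_chj ?twist_neq0 //.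
  rewrite -[x * _ == 1](inj_eq (mulIf (expf_neq0 d (mulf_neq0 y_neq0 (invr_neq0 a_neq0))))).
  have -> : x * (a / y) ^+ d * (y / a) ^+ d = x.
    by rewrite -mulrA -exprMn mulrA divfK // divff // expr1n mulr1.
  by rewrite mul1r; case: ifP; rewrite ?mulr0.
rewrite exchange_big /=.
have delta y : y != 0 ->
    \sum_(x | x != 0) \sum_(j < N) psi x * psi y * chj j (x * (a / y) ^+ d)
    = N%:R * (psi ((y / a) ^+ d) * psi y).
  move=> y_neq0; rewrite (eq_bigr _ (fun x x_neq0 => orthogonality x y x_neq0 y_neq0)).
  by rewrite sum_nz_delta 1?mulrC // expf_neq0 // mulf_neq0 ?invr_neq0.
rewrite (eq_bigr _ delta) -mulr_sumr WKd_sub1 (sum_nz_mull _ a_neq0); congr (_ * _).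
by apply: eq_bigr => z z_neq0; rewrite (psiD hp) [a * z]mulrC mulfK // addrC.
Qed.
End CharacterBasis.

Section GaussPairValuation.
Variables (K : finFieldType) (p d : nat) (hp : p \in [pchar K]).
Variable v : algC -> option rat.
Hypothesis hv : pval p v.
Local Notation N := (#|K|.-1).
Local Notation n := (logn p #|K|).
Hypotheses (d_gt0 : (0 < d)%N) (cdN : coprime d N).

Lemma v_card : v #|K|%:R = Some n%:R.
Proof. by rewrite {1}(card_pprimeChar hp) (v_charX hv). Qed.

Lemma v_predcard : v N%:R = Some 0.
Proof.
have -> : N%:R = -1 + #|K|%:R :> algC by rewrite natr_card addrC addrK.
rewrite (vD_strict hv) ?(vN hv) ?(v1 hv) // v_card /= -ltNge ltr0n.
exact: logn_card_gt0.
Qed.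

Lemma v_mchar (chi : K -> algC) (x : K) : mchar chi -> x != 0 -> v (chi x) = Some 0.
Proof. by move=> hchi /(mchar_unity hchi); apply: (v_unity_root hv (predcard_gt0 K)). Qed.

Lemma VKd_le_gauss_pair (chi : K -> algC) : mchar chi -> mchar_nontriv chi ->
  ole (VKd K p v d) (v (gauss_pair p d chi)).
Proof.
move=> hchi chi_nontriv; rewrite (gauss_pairE hp d_gt0 cdN hchi chi_nontriv).
apply: ole_trans (v_sum hv _ _ _); rewrite /VKd.
have v_xi a : a != 0 -> v ((chi a)^* ^+ d) = Some 0 := v_mchar (exp_mchar (conj_mchar hchi) d).
by rewrite (eq_bigr _ (fun a a_neq0 => vMunitr hv _ (v_xi a a_neq0))) ole_refl.
Qed.

Lemma v_gauss_pair_conj (chi : K -> algC) : mchar chi -> mchar_nontriv chi ->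
  oadd (v (gauss_pair p d chi)) (v (gauss_pair p d (fun x => (chi x)^*))) = Some (n%:R *+ 2).
Proof.
move=> hchi chi_nontriv; have hchid := exp_mchar hchi d.
have chid_nontriv := exp_mchar_nontriv hchi chi_nontriv cdN.
have N1_neq0 : (-1 : K) != 0 by rewrite oppr_eq0 oner_eq0.
rewrite -(vM hv); have -> : gauss_pair p d chi * gauss_pair p d (fun x => (chi x)^*)
    = (gaussK p chi * gaussK p (fun x => (chi x)^*))
      * (gaussK p (fun x => chi x ^+ d) * gaussK p (fun x => (chi x ^+ d)^*)).
  rewrite /gauss_pair (@eq_gaussK _ p (fun x => (chi x)^* ^+ d) (fun x => (chi x ^+ d)^*)).
    rewrite (@eq_gaussK _ p (fun x => (chi x)^*^* ^+ d) (fun x => chi x ^+ d)); first ring.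
    by move=> x; rewrite conjCK.
  by move=> x; rewrite rmorphXn.
rewrite (gauss_conj hp hchi chi_nontriv) (gauss_conj hp hchid chid_nontriv).
rewrite !(vM hv) (v_mchar hchi N1_neq0) (vX hv _ (v_mchar hchi N1_neq0)) v_card /=.
by rewrite mul0rn !add0r mulr2n.
Qed.

Variables (g : K) (w : algC).
Hypotheses (pg : N.-primitive_root g) (pw : N.-primitive_root w).
Local Notation vmin_chj :=
  (\big[omin/None]_(j <- index_iota 1 N) v (gauss_pair p d (chj g w j))).

Lemma VKd_ge_omin : ole (omin (Some n%:R) vmin_chj) (VKd K p v d).
Proof.
apply: big_omin_glb => a a_neq0.
have v_chjX j : v (chj g w j a ^+ d) = Some 0.
  by rewrite (vX hv _ (v_mchar (chj_mchar pg pw j) a_neq0)) mul0rn.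
have := sum_gauss_pair_chj hp pg pw d_gt0 a_neq0.
rewrite -(big_mkord xpredT (fun j => gauss_pair p d (chj g w j) * chj g w j a ^+ d)).
rewrite big_ltn ?predcard_gt0 // gauss_pair_chj0 // {1}/chj mul0n expr0 expr1n mul1r.
set R := \sum_(1 <= j < N) _ => expansion.
rewrite -(vMunitr hv _ v_predcard); have -> : WKd p d a * N%:R = #|K|%:R + R.
  by rewrite natr_card -[R](addKr 1) expansion; ring.
apply: ole_trans (vD hv _ _); apply: omin_mono.
  by rewrite v_card ole_refl.
apply: ole_trans (v_sum hv _ _ _); rewrite (eq_bigr _ (fun j _ => vMunitr hv _ (v_chjX j))).
exact: ole_refl.
Qed.

Lemma vmin_chj_le : (1 < N)%N -> ole vmin_chj (Some n%:R).
Proof.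
move=> N_gt1; have := v_gauss_pair_conj (chj_mchar pg pw 1) (chj_nontriv pg pw (j := 1) N_gt1).
rewrite (eq_gauss_pair _ _ (conj_chj g pw 1)) muln1 => /ole_half; apply; apply: big_omin_lb.
  by rewrite mem_index_iota; exact: N_gt1.
have N_gt0 := ltnW N_gt1; rewrite mem_index_iota ltn_predL N_gt0 andbT.
by rewrite -ltnS prednK.
Qed.
End GaussPairValuation.

Theorem lemma4p1 (K : finFieldType) (p d : nat) (v : algC -> option rat) :
  p \in [pchar K] ->
  (2 < #|K|)%N ->
  coprime d #|K|.-1 ->
  pval p v ->
  is_omin
    (fun m => exists chi : K -> algC,
       [/\ mchar chi, mchar_nontriv chi &
           m = v (@gaussK K p chi * @gaussK K p (fun a => (chi a)^* ^+ d))])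
    (@VKd K p v d).
Proof.
move=> hp card_gt2 cdN hv.
have N_gt1 : (1 < #|K|.-1)%N by case: #|K| card_gt2 => [|[|[|k]]].
have d_gt0 : (0 < d)%N by case: d cdN => // /eqP; rewrite gcd0n => N1; rewrite N1 in N_gt1.
have [g pg] := finField_prim_root K; have [w pw] := C_prim_root_exists (predcard_gt0 K).
have iota_neq0 : index_iota 1 #|K|.-1 != [::].
  by rewrite -size_eq0 size_iota subn_eq0 -ltnNge N_gt1.
have [j0 j0_in vminE] :=
  big_omin_attained (fun j => v (gauss_pair p d (chj g w j))) iota_neq0.
have := VKd_ge_omin hp hv d_gt0 pg pw; rewrite omin_r ?vmin_chj_le // vminE => VKd_ge.
rewrite mem_index_iota in j0_in.
split=> [|_ [chi [hchi chi_nontriv ->]]]; last exact: VKd_le_gauss_pair.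
exists (chj g w j0); split; [exact: chj_mchar|exact: chj_nontriv|].
by apply: ole_anti VKd_ge; apply: VKd_le_gauss_pair (chj_mchar pg pw j0) (chj_nontriv pg pw j0_in).
Qed.
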